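(* Under Conditions 1 and 2, there exist constants $T_0>0$ and $n_0\ge1$ such that for all $n\ge n_0$ and all $u\in\mathbb R$ with $|u|<1/T_0$, $$\Big|\int_0^\infty\sin(ut)\,\bar\Lambda^{(n)}_\beta(t)\,dt\Big|\ge\frac3{16}\sigma|u| .$$
   Context: Notation: $\mathbb Z_+=\{1,2,\dots\}$, $\mathbb R_+=[0,\infty)$. For each $n\ge1$: $\lambda^{(n)}>0$; a probability $\Lambda^{(n)}$ on $\mathbb R_+$ with tail $\bar\Lambda^{(n)}(t)=\Lambda^{(n)}((t,\infty))$, $\eta^{(n)}=\int_0^\infty y\Lambda^{(n)}(dy)$, $\sigma^{(n)}=\frac12\int_0^\infty y^2\Lambda^{(n)}(dy)$ finite; probability laws $(p_k^{(n)})_{k\ge1}$, $(q_k^{(n)})_{k\ge1}$ on $\mathbb Z_+$ with generating functions $g^{(n)},h^{(n)}$, $m^{(n)}=\sum_kkp_k^{(n)}<\infty$; $\gamma_n>0$ with $\gamma_n\to\infty$, $\gamma_n/n\to\gamma_*\in[0,\infty)$. $\phi^{(n)}(z)=n\gamma_n[g^{(n)}(1-z/n)-(1-z/n)]$, $\psi^{(n)}(z)=\gamma_n[1-h^{(n)}(1-z/n)]$ for $z\in[0,n]$. Condition 1: (i) $\lambda^{(n)}\to\lambda>0$, $\eta^{(n)}\to\eta>0$, $\sigma^{(n)}\to\sigma>0$, $\gamma_n(1-\lambda^{(n)}\eta^{(n)})\to b\in\mathbb R$; (ii) $\psi^{(n)}\to\psi$ uniformly on compacts of $[0,\infty)$;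 (iii) $\{\phi^{(n)}\}$ is uniformly Lipschitz on bounded intervals and converges uniformly on compacts to a continuous $\phi$. Under Condition 1, $\lambda\eta=1$ and $m:=\lim_n\gamma_n(1-m^{(n)})$ exists (so $\gamma_n(1-\lambda^{(n)}\eta^{(n)}m^{(n)})\to b+m$). Condition 2 (for some $\alpha\in(1,2)$): (1) there are $C,k_0>0$ with $n\gamma_n\sum_{k\ge k_0}(k/n)^\alpha p^{(n)}_k+\sum_kk^\alpha q^{(n)}_k\le C$ for all $n$, and $\lim_{k_1\to\infty}\limsup_n\gamma_n\sum_{k\ge k_1}kp^{(n)}_k=0$; (2) there are $C_0>0$ and a probability $\Lambda^*$ on $\mathbb R_+$ with $\int t^{2\alpha}\Lambda^*(dt)<\infty$ and $\bar\Lambda^{(n)}\le C_0\bar\Lambda^*$ for all $n$. Fix $\beta\in[0,\infty)$ with $\beta>-(b+m)/(\sigma\lambda)$. Define $\bar\Lambda_\beta^{(n)}(t)=e^{-\beta t/\gamma_n}\bar\Lambda^{(n)}(t)$. *)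

From Stdlib Require Import Reals Lra Lia.
Open Scope R_scope.

Definition ImpInt0 (f : R -> R) (l : R) : Prop :=
  exists F : R -> R,
    (forall T, 0 <= T -> exists pr : Riemann_integrable f 0 T, RiemannInt pr = F T) /\
    (forall eps, eps > 0 -> exists M, forall T, T >= M -> Rabs (F T - l) < eps).

(* L is the tail function t |-> Lam((t,oo)) (t >= 0) of a probability
   measure Lam on R_+ ; such functions are in bijection with probability
   measures on R_+ (the atom at 0 has mass 1 - L 0). *)
Definition is_tail_fun (L : R -> R) : Prop :=
  (forall t, 0 <= t -> 0 <= L t <= 1) /\
  (forall s t, 0 <= s -> s <= t -> L t <= L s) /\
  (forall t, 0 <= t -> forall eps, eps > 0 ->
     exists d, d > 0 /\ forall s, t <= s -> s < t + d -> Rabs (L s - L t) < eps) /\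
  (forall eps, eps > 0 -> exists M, forall t, t >= M -> L t < eps).

(* A probability law on Z_+ = {1,2,...}, given by its masses p k (p 0 = 0). *)
Definition is_pmf_pos (p : nat -> R) : Prop :=
  p 0%nat = 0 /\ (forall k, 0 <= p k) /\ infinite_sum p 1.

(* real power with the convention 0^a = 0 (used only for a > 0) *)
Definition rpow (x a : R) : R := if Rlt_dec 0 x then Rpower x a else 0.

Definition phin (g : nat -> R -> R) (gam : nat -> R) (n : nat) (z : R) : R :=
  INR n * gam n * (g n (1 - z / INR n) - (1 - z / INR n)).

Definition psin (h : nat -> R -> R) (gam : nat -> R) (n : nat) (z : R) : R :=
  gam n * (1 - h n (1 - z / INR n)).

Definition Standing (lam : nat -> R) (Lbar : nat -> R -> R) (eta sig : nat -> R)
  (p q : nat -> nat -> R) (g h : nat -> R -> R) (mn : nat -> R) (gam : nat -> R)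
  : Prop :=
  (forall n, (1 <= n)%nat -> lam n > 0) /\
  (forall n, (1 <= n)%nat -> is_tail_fun (Lbar n)) /\
  (* eta^(n) = int y Lam(dy) = int_0^oo Lbar(t) dt *)
  (forall n, (1 <= n)%nat -> ImpInt0 (Lbar n) (eta n)) /\
  (* sig^(n) = 1/2 int y^2 Lam(dy) = int_0^oo t Lbar(t) dt, finite *)
  (forall n, (1 <= n)%nat -> ImpInt0 (fun t => t * Lbar n t) (sig n)) /\
  (forall n, (1 <= n)%nat -> is_pmf_pos (p n) /\ is_pmf_pos (q n)) /\
  (forall n, (1 <= n)%nat -> forall s, -1 <= s <= 1 ->
      infinite_sum (fun k => p n k * s ^ k) (g n s) /\
      infinite_sum (fun k => q n k * s ^ k) (h n s)) /\
  (forall n, (1 <= n)%nat -> infinite_sum (fun k => INR k * p n k) (mn n)) /\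
  (forall n, (1 <= n)%nat -> gam n > 0) /\
  cv_infty gam /\
  (exists gstar, 0 <= gstar /\ Un_cv (fun n => gam n / INR n) gstar).

Definition Condition1 (lam : nat -> R) (eta sig : nat -> R)
  (g h : nat -> R -> R) (gam : nat -> R)
  (lm et sg b : R) (psi phi : R -> R) : Prop :=
  (Un_cv lam lm /\ lm > 0) /\ (Un_cv eta et /\ et > 0) /\ (Un_cv sig sg /\ sg > 0) /\
  Un_cv (fun n => gam n * (1 - lam n * eta n)) b /\
  (forall K, 0 <= K -> forall eps, eps > 0 -> exists N, forall n, (N <= n)%nat ->
     forall z, 0 <= z <= K -> z <= INR n -> Rabs (psin h gam n z - psi z) < eps) /\
  (forall K, 0 <= K -> exists Lc, forall n, (1 <= n)%nat -> forall x y,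
     0 <= x <= K -> 0 <= y <= K -> x <= INR n -> y <= INR n ->
     Rabs (phin g gam n x - phin g gam n y) <= Lc * Rabs (x - y)) /\
  (forall K, 0 <= K -> forall eps, eps > 0 -> exists N, forall n, (N <= n)%nat ->
     forall z, 0 <= z <= K -> z <= INR n -> Rabs (phin g gam n z - phi z) < eps) /\
  (forall x, 0 <= x -> forall eps, eps > 0 -> exists d, d > 0 /\
     forall y, 0 <= y -> Rabs (y - x) < d -> Rabs (phi y - phi x) < eps).

Definition Condition2 (alpha : R) (Lbar : nat -> R -> R) (p q : nat -> nat -> R)
  (gam : nat -> R) : Prop :=
  1 < alpha < 2 /\
  (exists C k0, C > 0 /\ (1 <= k0)%nat /\ forall n, (1 <= n)%nat ->
     exists S1 S2,
       infinite_sum (fun k => if Nat.leb k0 k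
                              then Rpower (INR k / INR n) alpha * p n k else 0) S1 /\
       infinite_sum (fun k => rpow (INR k) alpha * q n k) S2 /\
       INR n * gam n * S1 + S2 <= C) /\
  (forall eps, eps > 0 -> exists K1, forall k1, (K1 <= k1)%nat ->
     exists N, forall n, (N <= n)%nat -> forall S,
       infinite_sum (fun k => if Nat.leb k1 k then INR k * p n k else 0) S ->
       gam n * S < eps) /\
  (* (2) int t^(2 alpha) Lam*(dt) < oo is written via the tail:
         int t^(2 alpha) Lam*(dt) = 2 alpha int_0^oo t^(2 alpha - 1) Lbar*(t) dt *)
  (exists C0 Lstar, C0 > 0 /\ is_tail_fun Lstar /\
     (exists I, ImpInt0 (fun t => rpow t (2 * alpha - 1) * Lstar t) I) /\
     forall n, (1 <= n)%nat -> forall t, 0 <= t -> Lbar n t <= C0 * Lstar t).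

From Stdlib Require Import Reals Lra Lia List ClassicalEpsilon RList.
Open Scope R_scope.

(* For [beta >= 0] and [n] large the damping [exp (- beta t / gam n)] is
   negligible on [0, M], and there [sin (u t)] is [u t] up to a relative error
   [(u M)^2 / 6]; hence [int_0^M sin (u t) Lbar_beta(t) dt] is close to
   [u int_0^M t Lbar(t) dt].  Beyond [M] the crude bound [|sin (u t)| <= |u| t]
   and [t <= t^(2 alpha - 1) / M^(2 alpha - 2)] make the contribution at most
   [2 |u| C0 / M^(2 alpha - 2) int t^(2 alpha - 1) Lbar*(t) dt].  So the
   transform is [u sig_n (1 + O((u M)^2 + M / gam_n)) + O(|u| M^(2 - 2 alpha))],
   and [sig_n -> sig > 0] gives the lower bound once [M], then [n], are large
   and [|u| < 1 / (4 M)]. *)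

(** * Riemann integrability of continuous times monotone functions *)

Fixpoint grid_pts (a h : R) (i N : nat) : list R :=
  match N with
  | O => (a + INR i * h) :: nil
  | S N' => (a + INR i * h) :: grid_pts a h (S i) N'
  end.

Fixpoint grid_vals (v : nat -> R) (i N : nat) : list R :=
  match N with O => nil | S N' => v i :: grid_vals v (S i) N' end.

Fixpoint grid_step (v : nat -> R) (a h : R) (i N : nat) (t : R) : R :=
  match N with
  | O => v i
  | S N' => if Rle_dec t (a + INR (S i) * h) then v i else grid_step v a h (S i) N' t
  end.

Fixpoint sum_from (v : nat -> R) (i N : nat) : R :=
  match N with O => 0 | S N' => v i + sum_from v (S i) N' end.

Lemma grid_pts_length a h i N : length (grid_pts a h i N) = S N.
Proof. revert i; induction N; intros; simpl; auto. Qed.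

Lemma grid_vals_length v i N : length (grid_vals v i N) = N.
Proof. revert i; induction N; intros; simpl; auto. Qed.

Lemma pos_Rl_grid_pts a h i N k :
  (k <= N)%nat -> pos_Rl (grid_pts a h i N) k = a + INR (i + k) * h.
Proof.
  revert i k; induction N; intros i k Hk.
  - assert (k = 0%nat) by lia; subst; simpl; rewrite Nat.add_0_r; auto.
  - destruct k; simpl.
    + rewrite Nat.add_0_r; auto.
    + rewrite IHN by lia. replace (S i + k)%nat with (i + S k)%nat by lia; reflexivity.
Qed.

Lemma pos_Rl_grid_vals v i N k : (k < N)%nat -> pos_Rl (grid_vals v i N) k = v (i + k)%nat.
Proof.
  revert i k; induction N; intros i k Hk; [lia|].
  destruct k; simpl.
  - rewrite Nat.add_0_r; auto.
  - rewrite IHN by lia. f_equal. lia.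
Qed.

Lemma grid_step_open v a h i N k t : 0 < h -> (k < N)%nat ->
  a + INR (i + k) * h < t < a + INR (i + S k) * h -> grid_step v a h i N t = v (i + k)%nat.
Proof.
  intro hp; revert i k; induction N; intros i k Hk Ht; [lia|].
  cbn [grid_step]. destruct (Rle_dec t (a + INR (S i) * h)) as [H|H].
  - destruct k; [rewrite Nat.add_0_r; auto|].
    exfalso. assert (INR (S i) <= INR (i + S k)) by (apply le_INR; lia). nra.
  - destruct k.
    + exfalso. rewrite Nat.add_0_r, Nat.add_1_r in Ht. lra.
    + replace (i + S k)%nat with (S i + k)%nat by lia.
      apply IHN; [lia|]. replace (S i + k)%nat with (i + S k)%nat by lia.
      replace (S i + S k)%nat with (i + S (S k))%nat by lia. auto.
Qed.

Lemma grid_step_cell a h i N t : 0 < h -> (1 <= N)%nat ->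
  a + INR i * h <= t <= a + INR (i + N) * h ->
  exists k, (k < N)%nat /\ a + INR (i + k) * h <= t <= a + INR (i + S k) * h /\
    forall v, grid_step v a h i N t = v (i + k)%nat.
Proof.
  intro hp; revert i; induction N; intros i HN Ht; [lia|].
  cbn [grid_step]. destruct (Rle_dec t (a + INR (S i) * h)) as [H|H].
  - exists 0%nat. rewrite Nat.add_0_r, Nat.add_1_r. split; [lia|]. split; [lra|auto].
  - destruct N.
    + exfalso. rewrite Nat.add_1_r in Ht. lra.
    + destruct (IHN (S i)) as [k [Hk [Ht2 Hv]]]; [lia| |].
      * split; [lra|]. replace (S i + S N)%nat with (i + S (S N))%nat by lia. lra.
      * exists (S k). split; [lia|].
        replace (i + S k)%nat with (S i + k)%nat by lia.
        replace (i + S (S k))%nat with (S i + S k)%nat by lia. auto.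
Qed.

Lemma Int_SF_grid v a h i N : Int_SF (grid_vals v i N) (grid_pts a h i N) = h * sum_from v i N.
Proof.
  revert i; induction N; intros i.
  - cbn [Int_SF grid_vals grid_pts sum_from]. ring.
  - destruct N.
    + cbn [Int_SF grid_vals grid_pts sum_from]. rewrite S_INR. ring.
    + change (grid_pts a h i (S (S N))) with ((a + INR i * h) :: grid_pts a h (S i) (S N)).
      change (grid_vals v i (S (S N))) with (v i :: grid_vals v (S i) (S N)).
      change (sum_from v i (S (S N))) with (v i + sum_from v (S i) (S N)).
      rewrite Rmult_plus_distr_l, <- IHN.
      change (grid_pts a h (S i) (S N)) with ((a + INR (S i) * h) :: grid_pts a h (S (S i)) N).
      cbn [Int_SF]. rewrite S_INR. ring.
Qed.

Lemma grid_pts_ordered a h i N : 0 <= h -> ordered_Rlist (grid_pts a h i N).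
Proof.
  intros hp k Hk. rewrite grid_pts_length in Hk. simpl in Hk.
  rewrite !pos_Rl_grid_pts by lia.
  assert (INR (i + k) <= INR (i + S k)) by (apply le_INR; lia). nra.
Qed.

Definition grid_StepFun (v : nat -> R) (a b : R) (N : nat) (hab : a < b) (hN : (1 <= N)%nat) :
  StepFun a b.
Proof.
  set (h := (b - a) / INR N).
  assert (hp : 0 < h).
  { unfold h. apply Rdiv_lt_0_compat; [lra|]. apply lt_0_INR; lia. }
  apply (mkStepFun (fe := grid_step v a h 0 N)).
  exists (grid_pts a h 0 N). exists (grid_vals v 0 N).
  unfold adapted_couple. rewrite grid_pts_length, grid_vals_length.
  rewrite Rmin_left, Rmax_right by lra.
  split; [apply grid_pts_ordered; lra|].
  split; [rewrite pos_Rl_grid_pts by lia; simpl; ring|].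
  split.
  { simpl pred. rewrite pos_Rl_grid_pts by lia. simpl. unfold h. field.
    apply not_0_INR; lia. }
  split; [auto|].
  intros k Hk. simpl in Hk. intros t Ht. unfold open_interval in Ht.
  rewrite !pos_Rl_grid_pts in Ht by lia. rewrite pos_Rl_grid_vals by lia.
  apply grid_step_open; auto.
Defined.

Lemma RiemannInt_SF_grid v a b N hab hN :
  RiemannInt_SF (grid_StepFun v a b N hab hN) = (b - a) / INR N * sum_from v 0 N.
Proof.
  unfold RiemannInt_SF. destruct (Rle_dec a b); [|lra].
  unfold subdivision_val, subdivision. simpl. apply Int_SF_grid.
Qed.

Lemma sum_from_ge0 w i N :
  (forall k, (i <= k < i + N)%nat -> 0 <= w k) -> 0 <= sum_from w i N.
Proof.
  revert i; induction N; intros i H; cbn [sum_from]; [lra|].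
  assert (0 <= w i) by (apply H; lia).
  assert (0 <= sum_from w (S i) N) by (apply IHN; intros; apply H; lia). lra.
Qed.

Lemma sum_from_telescope c F i N :
  sum_from (fun k => c + (F k - F (S k))) i N = INR N * c + (F i - F (i + N)%nat).
Proof.
  revert i; induction N; intros i; cbn [sum_from].
  - rewrite Nat.add_0_r. simpl. ring.
  - rewrite IHN. replace (S i + N)%nat with (i + S N)%nat by lia. rewrite S_INR. ring.
Qed.

(* Riemann's criterion on uniform subdivisions: [w k] bounds the oscillation
   of [f] on the [k]-th cell. *)
Lemma Riemann_integrable_uniform_grid f a b : a < b ->
  (forall eps, 0 < eps -> exists N (w : nat -> R), (1 <= N)%nat /\
    (forall k, (k < N)%nat -> forall t,
       a + INR k * ((b - a) / INR N) <= t <= a + INR (S k) * ((b - a) / INR N) ->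
       Rabs (f t - f (a + INR k * ((b - a) / INR N))) <= w k) /\
    (b - a) / INR N * sum_from w 0 N < eps) ->
  Riemann_integrable f a b.
Proof.
  intros hab H eps.
  destruct (constructive_indefinite_description _ (H eps (cond_pos eps))) as [N HN].
  destruct (constructive_indefinite_description _ HN) as [w [hN [Hw Hs]]].
  set (h := (b - a) / INR N) in *.
  assert (hp : 0 < h).
  { unfold h. apply Rdiv_lt_0_compat; [lra|]. apply lt_0_INR; lia. }
  exists (grid_StepFun (fun k => f (a + INR k * h)) a b N hab hN).
  exists (grid_StepFun w a b N hab hN).
  split.
  - intros t Ht. rewrite Rmin_left, Rmax_right in Ht by lra. cbn - [grid_step]. fold h.
    destruct (grid_step_cell a h 0 N t hp hN) as [k [Hk [Ht2 Hv]]].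
    { simpl. replace (INR N * h) with (b - a); [lra|].
      unfold h. field. apply not_0_INR; lia. }
    rewrite !Hv. simpl in Ht2 |- *. apply Hw; auto.
  - rewrite RiemannInt_SF_grid. fold h. rewrite Rabs_right; auto.
    apply Rle_ge, Rmult_le_pos; [lra|]. apply sum_from_ge0.
    intros k Hk. apply Rle_trans with (Rabs (f (a + INR k * h) - f (a + INR k * h))).
    + apply Rabs_pos.
    + apply Hw; [lia|]. rewrite S_INR. nra.
Qed.

Lemma mul_noninc_oscillation gx gt Lx Lt Ly e :
  Rabs (gt - gx) <= e -> Rabs gx <= 1 -> 0 <= Lt <= 1 -> Ly <= Lt <= Lx ->
  Rabs (gt * Lt - gx * Lx) <= e + (Lx - Ly).
Proof.
  intros Hg Hgx HLt HL.
  replace (gt * Lt - gx * Lx) with ((gt - gx) * Lt + gx * (Lt - Lx)) by ring.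
  eapply Rle_trans; [apply Rabs_triang|]. rewrite !Rabs_mult.
  rewrite (Rabs_right Lt), (Rabs_left1 (Lt - Lx)) by lra.
  assert (0 <= Rabs (gt - gx)) by apply Rabs_pos.
  assert (0 <= Rabs gx) by apply Rabs_pos.
  nra.
Qed.

(* The oscillation of [g L] on a cell is the modulus of continuity of [g] plus
   the drop of [L]; the drops telescope to [L a - L b <= 1]. *)
Lemma Riemann_integrable_mul_noninc g L a b : a < b ->
  (forall x, a <= x <= b -> continuity_pt g x) ->
  (forall x, a <= x <= b -> Rabs (g x) <= 1) ->
  (forall x, a <= x <= b -> 0 <= L x <= 1) ->
  (forall x y, a <= x -> x <= y -> y <= b -> L y <= L x) ->
  Riemann_integrable (fun t => g t * L t) a b.
Proof.
  intros hab Hc Hg HL Hmon. apply Riemann_integrable_uniform_grid; auto.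
  intros eps Heps.
  set (e := eps / (2 * (b - a))).
  assert (He : 0 < e) by (apply Rdiv_lt_0_compat; lra).
  destruct (Heine_cor2 Hc (mkposreal _ He)) as [del Hdel]. simpl in Hdel.
  set (m := Rmin del (eps / 2)).
  assert (Hm : 0 < m) by (unfold m; apply Rmin_glb_lt; [apply cond_pos|lra]).
  destruct (archimed_cor1 (m / (b - a))) as [N [HN1 HN2]]; [apply Rdiv_lt_0_compat; lra|].
  set (h := (b - a) / INR N).
  assert (HNp : 0 < INR N) by (apply lt_0_INR; lia).
  assert (HNh : INR N * h = b - a) by (unfold h; field; lra).
  assert (hp : 0 < h) by (unfold h; apply Rdiv_lt_0_compat; lra).
  assert (hm : h < m).
  { unfold h. apply Rmult_lt_reg_r with (/ (b - a)); [apply Rinv_0_lt_compat; lra|].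
    replace ((b - a) / INR N * / (b - a)) with (/ INR N) by (field; lra). exact HN1. }
  assert (hdel : h < del) by (apply Rlt_le_trans with m; auto; apply Rmin_l).
  assert (heps : h < eps / 2) by (apply Rlt_le_trans with m; auto; apply Rmin_r).
  exists N, (fun k => e + (L (a + INR k * h) - L (a + INR (S k) * h))).
  split; [lia|]. fold h. split.
  - intros k Hk t Ht.
    assert (Hk1 : INR (S k) <= INR N) by (apply le_INR; lia).
    assert (Hk0 : 0 <= INR k) by apply pos_INR.
    rewrite S_INR in Hk1, Ht |- *.
    set (x := a + INR k * h) in *.
    replace (a + (INR k + 1) * h) with (x + h) in * by (unfold x; ring).
    assert (Hx : a <= x <= b) by (unfold x; split; nra).
    assert (Hxh : x + h <= b) by (unfold x; nra).
    apply mul_noninc_oscillation.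
    + left. apply Hdel; try lra. rewrite Rabs_right; lra.
    + apply Hg; lra.
    + apply HL; lra.
    + split; apply Hmon; lra.
  - rewrite sum_from_telescope. simpl (0 + N)%nat.
    replace (a + INR 0 * h) with a by (simpl; ring).
    replace (a + INR N * h) with b by lra.
    replace (h * (INR N * e + (L a - L b))) with (INR N * h * e + h * (L a - L b)) by ring.
    rewrite HNh. replace ((b - a) * e) with (eps / 2) by (unfold e; field; lra).
    assert (HLa := HL a ltac:(lra)). assert (HLb := HL b ltac:(lra)).
    nra.
Qed.

(** * Improper integrals on [0, oo) *)

Definition cv_at_infty (F : R -> R) (l : R) : Prop :=
  forall eps, eps > 0 -> exists M, forall T, T >= M -> Rabs (F T - l) < eps.

Lemma cv_at_infty_cauchy (F : R -> R) :
  (forall eps, eps > 0 -> exists M, forall T1 T2, T1 >= M -> T2 >= M ->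
     Rabs (F T1 - F T2) < eps) ->
  exists l, cv_at_infty F l.
Proof.
  intro HC.
  assert (Hcc : Cauchy_crit (fun k => F (INR k))).
  { intros eps Heps. destruct (HC eps Heps) as [M HM].
    destruct (INR_archimed 1 M ltac:(lra)) as [N HN].
    exists N. intros n m Hn Hm. unfold Rdist.
    assert (INR N <= INR n) by (apply le_INR; lia).
    assert (INR N <= INR m) by (apply le_INR; lia).
    apply HM; lra. }
  destruct (R_complete _ Hcc) as [l Hl]. exists l.
  intros eps Heps. destruct (HC (eps / 2) ltac:(lra)) as [M HM].
  destruct (Hl (eps / 2) ltac:(lra)) as [N0 HN0].
  destruct (INR_archimed 1 M ltac:(lra)) as [N1 HN1].
  exists M. intros T HT.
  set (k := max N0 N1).
  assert (Hk1 : INR N1 <= INR k) by (apply le_INR; lia).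
  assert (H1 := HM T (INR k) HT ltac:(lra)).
  assert (H2 := HN0 k ltac:(lia)). unfold Rdist in H2.
  replace (F T - l) with ((F T - F (INR k)) + (F (INR k) - l)) by ring.
  eapply Rle_lt_trans; [apply Rabs_triang|]. lra.
Qed.

Lemma cv_at_infty_lin F G a b c1 c2 :
  cv_at_infty F a -> cv_at_infty G b ->
  cv_at_infty (fun T => c1 * F T + c2 * G T) (c1 * a + c2 * b).
Proof.
  intros HF HG eps Heps.
  set (k := 1 + Rabs c1 + Rabs c2).
  assert (Hk : 0 < k) by (unfold k; generalize (Rabs_pos c1) (Rabs_pos c2); lra).
  destruct (HF (eps / k)) as [M1 H1]; [apply Rdiv_lt_0_compat; lra|].
  destruct (HG (eps / k)) as [M2 H2]; [apply Rdiv_lt_0_compat; lra|].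
  exists (Rmax M1 M2). intros T HT.
  assert (A1 := H1 T ltac:(generalize (Rmax_l M1 M2); lra)).
  assert (A2 := H2 T ltac:(generalize (Rmax_r M1 M2); lra)).
  replace (c1 * F T + c2 * G T - (c1 * a + c2 * b))
    with (c1 * (F T - a) + c2 * (G T - b)) by ring.
  eapply Rle_lt_trans; [apply Rabs_triang|]. rewrite !Rabs_mult.
  assert (Rabs c1 * Rabs (F T - a) <= Rabs c1 * (eps / k))
    by (apply Rmult_le_compat_l; [apply Rabs_pos|lra]).
  assert (Rabs c2 * Rabs (G T - b) <= Rabs c2 * (eps / k))
    by (apply Rmult_le_compat_l; [apply Rabs_pos|lra]).
  assert (E : Rabs c1 * (eps / k) + Rabs c2 * (eps / k) = eps - eps / k)
    by (unfold k; field; unfold k in Hk; lra).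
  assert (0 < eps / k) by (apply Rdiv_lt_0_compat; lra).
  lra.
Qed.

Lemma cv_at_infty_abs_le F G a b : cv_at_infty F a -> cv_at_infty G b ->
  (forall T, 0 <= T -> Rabs (F T) <= G T) -> Rabs a <= b.
Proof.
  intros HF HG Hle. apply Rnot_lt_le. intro Hlt.
  set (e := (Rabs a - b) / 2).
  destruct (HF e) as [M1 H1]; [unfold e; lra|].
  destruct (HG e) as [M2 H2]; [unfold e; lra|].
  set (T := Rmax (Rmax M1 M2) 0).
  assert (Q1 := Rmax_l (Rmax M1 M2) 0). assert (Q2 := Rmax_r (Rmax M1 M2) 0).
  assert (Q3 := Rmax_l M1 M2). assert (Q4 := Rmax_r M1 M2).
  assert (A1 := H1 T ltac:(fold T in Q1; lra)).
  assert (A2 := H2 T ltac:(fold T in Q1; lra)).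
  assert (A3 := Hle T Q2).
  assert (Rabs a <= Rabs (F T) + Rabs (F T - a)).
  { replace a with (F T - (F T - a)) at 1 by ring.
    eapply Rle_trans; [apply Rabs_triang|]. rewrite Rabs_Ropp. lra. }
  destruct (Rabs_def2 _ _ A2). unfold e in *. lra.
Qed.

Lemma RiemannInt_abs_le f g a b (p1 : Riemann_integrable f a b) (p2 : Riemann_integrable g a b) :
  a <= b -> (forall x, a < x < b -> Rabs (f x) <= g x) -> Rabs (RiemannInt p1) <= RiemannInt p2.
Proof.
  intros hab H.
  eapply Rle_trans; [apply (RiemannInt_P17 p1 (RiemannInt_P16 p1) hab)|].
  apply RiemannInt_P19; auto.
Qed.

Lemma RiemannInt_scal f a b k (p : Riemann_integrable f a b)
  (pk : Riemann_integrable (fun x => k * f x) a b) :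
  a <= b -> RiemannInt pk = k * RiemannInt p.
Proof.
  intro hab.
  set (p0 := RiemannInt_P14 a b 0).
  replace (k * RiemannInt p) with (RiemannInt p0 + k * RiemannInt p)
    by (rewrite (RiemannInt_P15 p0); ring).
  rewrite <- (RiemannInt_P13 p0 p (RiemannInt_P10 k p0 p)).
  apply RiemannInt_P18; [exact hab|]. intros; unfold fct_cte; ring.
Qed.

Lemma ImpInt0_lin f g a b c1 c2 : ImpInt0 f a -> ImpInt0 g b ->
  ImpInt0 (fun t => c1 * f t + c2 * g t) (c1 * a + c2 * b).
Proof.
  intros [F [HFi HFc]] [G [HGi HGc]].
  exists (fun T => c1 * F T + c2 * G T). split; [|exact (cv_at_infty_lin F G a b c1 c2 HFc HGc)].
  intros T hT. destruct (HFi T hT) as [pf Ef]. destruct (HGi T hT) as [pg Eg].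
  set (pcf := Riemann_integrable_scal c1 pf).
  exists (RiemannInt_P10 c2 pcf pg).
  rewrite (RiemannInt_P13 pcf pg), (RiemannInt_scal f 0 T c1 pf pcf hT), Ef, Eg.
  reflexivity.
Qed.

Lemma ImpInt0_abs_le f F a A : ImpInt0 f a -> ImpInt0 F A ->
  (forall x, 0 < x -> Rabs (f x) <= F x) -> Rabs a <= A.
Proof.
  intros [Sf [Hfi Hfc]] [SF [HFi HFc]] Hle.
  apply (cv_at_infty_abs_le Sf SF a A Hfc HFc). intros T hT.
  destruct (Hfi T hT) as [p1 E1]. destruct (HFi T hT) as [p2 E2].
  rewrite <- E1, <- E2. apply RiemannInt_abs_le; [exact hT|].
  intros x Hx. apply Hle. lra.
Qed.

(* Dominated by an integrable function, [s] has Cauchy partial integrals. *)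
Lemma ImpInt0_dominated s F A :
  (forall T, 0 <= T -> Riemann_integrable s 0 T) ->
  (forall x, 0 < x -> Rabs (s x) <= F x) -> ImpInt0 F A ->
  exists I, ImpInt0 s I.
Proof.
  intros ints Hle [SF [HFi HFc]].
  set (S := fun T => match Rle_dec 0 T with
                     | left hT => RiemannInt (ints T hT) | right _ => 0 end).
  assert (SRI : forall T (pr : Riemann_integrable s 0 T), 0 <= T -> S T = RiemannInt pr).
  { intros T pr hT. unfold S. destruct (Rle_dec 0 T); [apply RiemannInt_P5|contradiction]. }
  assert (Hincr : forall T1 T2, 0 <= T1 -> T1 <= T2 -> Rabs (S T2 - S T1) <= SF T2 - SF T1).
  { intros T1 T2 h1 h12.
    destruct (HFi T2 ltac:(lra)) as [pF2 EF2]. destruct (HFi T1 h1) as [pF1 EF1].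
    set (ps2 := ints T2 ltac:(lra)). set (ps1 := ints T1 h1).
    set (ps12 := RiemannInt_P23 ps2 (conj h1 h12)).
    set (pF12 := RiemannInt_P23 pF2 (conj h1 h12)).
    rewrite (SRI T2 ps2), (SRI T1 ps1), <- EF2, <- EF1 by lra.
    rewrite <- (RiemannInt_P26 ps1 ps12 ps2), <- (RiemannInt_P26 pF1 pF12 pF2).
    replace (RiemannInt ps1 + RiemannInt ps12 - RiemannInt ps1) with (RiemannInt ps12) by ring.
    replace (RiemannInt pF1 + RiemannInt pF12 - RiemannInt pF1) with (RiemannInt pF12) by ring.
    apply RiemannInt_abs_le; [exact h12|]. intros x Hx. apply Hle. lra. }
  destruct (cv_at_infty_cauchy S) as [I HI].
  { intros eps Heps. destruct (HFc (eps / 2) ltac:(lra)) as [M HM].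
    exists (Rmax M 0). intros T1 T2 hT1 hT2.
    assert (Q1 := Rmax_l M 0). assert (Q2 := Rmax_r M 0).
    destruct (Rabs_def2 _ _ (HM T1 ltac:(lra))), (Rabs_def2 _ _ (HM T2 ltac:(lra))).
    destruct (Rle_dec T1 T2).
    - rewrite Rabs_minus_sym. eapply Rle_lt_trans; [apply Hincr; lra|lra].
    - eapply Rle_lt_trans; [apply Hincr; lra|lra]. }
  exists I, S. split; [|exact HI].
  intros T hT. exists (ints T hT). symmetry. apply SRI, hT.
Qed.

(** * Pointwise estimates for the damped sine kernel *)

Lemma sin_taylor3_pos y : 0 <= y <= 1 -> y - y ^ 3 / 6 <= sin y <= y.
Proof.
  intro Hy.
  destruct (pre_sin_bound y 0 ltac:(lra) ltac:(lra)) as [H1 H2].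
  replace (sin_approx y (2 * 0 + 1)) with (y - y ^ 3 / 6) in H1
    by (unfold sin_approx, sin_term; simpl; field).
  replace (sin_approx y (2 * (0 + 1))) with (y - y ^ 3 / 6 + y ^ 5 / 120) in H2
    by (unfold sin_approx, sin_term; simpl; field).
  assert (Hy3 : 0 <= y ^ 3) by (apply pow_le; lra).
  assert (y ^ 5 <= y ^ 3).
  { replace (y ^ 5) with (y ^ 3 * (y * y)) by ring.
    rewrite <- (Rmult_1_r (y ^ 3)) at 2. apply Rmult_le_compat_l; nra. }
  lra.
Qed.

Lemma Rabs_sin_sub_le y : Rabs y <= 1 -> Rabs (sin y - y) <= Rabs y ^ 3 / 6.
Proof.
  intro Hy. destruct (Rle_dec 0 y).
  - rewrite (Rabs_right y) in * by lra. destruct (sin_taylor3_pos y); [lra|].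
    rewrite Rabs_left1 by lra. lra.
  - rewrite (Rabs_left y) in * by lra. destruct (sin_taylor3_pos (- y)); [lra|].
    rewrite sin_neg in *. rewrite Rabs_right by lra. lra.
Qed.

Lemma Rabs_sin_le y : Rabs (sin y) <= Rabs y.
Proof.
  assert (Hpos : forall z, 0 <= z <= 1 -> 0 <= sin z <= z).
  { intros z Hz. split; [apply sin_ge_0; generalize PI2_1; lra|apply sin_taylor3_pos, Hz]. }
  destruct (Rle_dec (Rabs y) 1) as [Hy|Hy].
  - destruct (Rle_dec 0 y).
    + rewrite (Rabs_right y) in * by lra. destruct (Hpos y); [lra|]. rewrite Rabs_right; lra.
    + rewrite (Rabs_left y) in * by lra. destruct (Hpos (- y)); [lra|].
      rewrite sin_neg in *. rewrite Rabs_left1; lra.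
  - apply Rle_trans with 1; [apply Rabs_le, SIN_bound|lra].
Qed.

Lemma exp_damping_bounds beta gm t : 0 <= beta -> 0 < gm -> 0 <= t ->
  0 < exp (- beta * t / gm) <= 1 /\ 1 - exp (- beta * t / gm) <= beta * t / gm.
Proof.
  intros Hb Hg Ht.
  assert (Hd : 0 <= beta * t / gm) by (apply Rmult_le_pos; [nra|left; apply Rinv_0_lt_compat; lra]).
  replace (- beta * t / gm) with (- (beta * t / gm)) by (field; lra).
  split; [split|].
  - apply exp_pos.
  - rewrite <- exp_0. destruct (Req_dec (beta * t / gm) 0) as [E|E].
    + rewrite E, Ropp_0. lra.
    + left. apply exp_increasing. lra.
  - assert (H := exp_ineq1_le (- (beta * t / gm))). lra.
Qed.

Lemma Rabs_sin_damping_le u beta gm t : 0 <= beta -> 0 < gm -> 0 <= t ->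
  Rabs (sin (u * t) * exp (- beta * t / gm)) <= 1.
Proof.
  intros Hb Hg Ht. destruct (exp_damping_bounds beta gm t Hb Hg Ht) as [[E0 E1] _].
  rewrite Rabs_mult, (Rabs_right (exp _)) by lra.
  assert (Rabs (sin (u * t)) <= 1) by apply Rabs_le, SIN_bound.
  assert (0 <= Rabs (sin (u * t))) by apply Rabs_pos. nra.
Qed.

Lemma sin_damped_near y E d : Rabs y <= 1 -> 0 <= 1 - E <= d ->
  Rabs (sin y * E - y) <= Rabs y * (y ^ 2 / 6 + d).
Proof.
  intros Hy HE.
  replace (sin y * E - y) with ((sin y - y) - sin y * (1 - E)) by ring.
  eapply Rle_trans; [apply Rabs_triang|]. rewrite Rabs_Ropp, Rabs_mult, (Rabs_right (1 - E)) by lra.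
  assert (Hc := Rabs_sin_sub_le y Hy). assert (Hs := Rabs_sin_le y).
  assert (Hy3 : Rabs y ^ 3 = Rabs y * y ^ 2) by (rewrite <- (pow2_abs y); ring).
  assert (0 <= Rabs (sin y)) by apply Rabs_pos.
  assert (Rabs (sin y) * (1 - E) <= Rabs y * d) by nra.
  lra.
Qed.

Lemma sin_damped_far y E : 0 <= E <= 1 -> Rabs (sin y * E - y) <= 2 * Rabs y.
Proof.
  intro HE. eapply Rle_trans; [apply Rabs_triang|].
  rewrite Rabs_Ropp, Rabs_mult, (Rabs_right E) by lra.
  assert (Hs := Rabs_sin_le y). assert (0 <= Rabs (sin y)) by apply Rabs_pos. nra.
Qed.

Lemma rpow_ge_mul_Rpower x M p : 0 < M <= x -> 1 <= p -> x * Rpower M (p - 1) <= rpow x p.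
Proof.
  intros HM Hp. unfold rpow. destruct (Rlt_dec 0 x) as [Hx|Hx]; [|lra].
  replace p with (1 + (p - 1)) at 2 by ring. rewrite Rpower_plus, Rpower_1 by exact Hx.
  apply Rmult_le_compat_l; [lra|]. apply Rle_Rpower_l; lra.
Qed.

(* Split at [M]: Taylor expansion of [sin] below, the growth of [t^p] above. *)
Lemma damped_sin_kernel_bound u x M beta gm p :
  0 < x -> 0 < M -> Rabs u * M <= 1 -> 0 <= beta -> 0 < gm -> 1 <= p ->
  Rabs (sin (u * x) * exp (- beta * x / gm) - u * x) <=
  Rabs u * (u ^ 2 * M ^ 2 / 6 + beta * M / gm) * x + 2 * Rabs u / Rpower M (p - 1) * rpow x p.
Proof.
  intros Hx HM HuM Hb Hg Hp.
  destruct (exp_damping_bounds beta gm x Hb Hg ltac:(lra)) as [[E0 E1] HE].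
  assert (Hu := Rabs_pos u). assert (HP := exp_pos ((p - 1) * ln M)).
  change (exp ((p - 1) * ln M)) with (Rpower M (p - 1)) in HP.
  assert (Hrp : 0 <= rpow x p) by (unfold rpow; destruct (Rlt_dec 0 x); [left; apply exp_pos|lra]).
  assert (HM2 : 0 <= u ^ 2 * M ^ 2) by (apply Rmult_le_pos; apply pow2_ge_0).
  assert (HbM : 0 <= beta * M / gm) by (apply Rmult_le_pos; [nra|left; apply Rinv_0_lt_compat; lra]).
  assert (Hfar_nn : 0 <= 2 * Rabs u / Rpower M (p - 1) * rpow x p)
    by (apply Rmult_le_pos; [apply Rmult_le_pos; [lra|left; apply Rinv_0_lt_compat; lra]|lra]).
  assert (Hay : Rabs (u * x) = Rabs u * x) by (rewrite Rabs_mult, (Rabs_right x) by lra; ring).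
  destruct (Rle_dec x M) as [HxM|HxM].
  - assert (Rabs u * x <= Rabs u * M) by (apply Rmult_le_compat_l; lra).
    assert (Hnear := sin_damped_near (u * x) (exp (- beta * x / gm)) (beta * x / gm)
                       ltac:(rewrite Hay; lra) ltac:(lra)).
    rewrite Hay in Hnear.
    assert ((u * x) ^ 2 <= u ^ 2 * M ^ 2) by (rewrite Rpow_mult_distr;
      apply Rmult_le_compat_l; [apply pow2_ge_0|nra]).
    assert (beta * x / gm <= beta * M / gm)
      by (apply Rmult_le_compat_r; [left; apply Rinv_0_lt_compat; lra|nra]).
    assert (Rabs u * x * ((u * x) ^ 2 / 6 + beta * x / gm) <=
            Rabs u * x * (u ^ 2 * M ^ 2 / 6 + beta * M / gm)) by (apply Rmult_le_compat_l; nra).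
    lra.
  - assert (Hfar := sin_damped_far (u * x) (exp (- beta * x / gm)) ltac:(lra)). rewrite Hay in Hfar.
    assert (Hgrowth := rpow_ge_mul_Rpower x M p ltac:(lra) Hp).
    assert (2 * Rabs u * x <= 2 * Rabs u / Rpower M (p - 1) * rpow x p).
    { apply Rmult_le_reg_r with (Rpower M (p - 1)); [lra|].
      replace (2 * Rabs u / Rpower M (p - 1) * rpow x p * Rpower M (p - 1))
        with (2 * Rabs u * rpow x p) by (field; lra). nra. }
    assert (0 <= Rabs u * (u ^ 2 * M ^ 2 / 6 + beta * M / gm) * x) by
      (apply Rmult_le_pos; [apply Rmult_le_pos|]; lra).
    lra.
Qed.

(** * The damped sine transform of a tail function *)

Lemma damped_sin_transform_exists L eta u beta gm :
  is_tail_fun L -> ImpInt0 L eta -> 0 <= beta -> 0 < gm ->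
  exists I, ImpInt0 (fun t => sin (u * t) * (exp (- beta * t / gm) * L t)) I.
Proof.
  intros [HL01 [HLmon _]] Heta Hb Hg.
  apply (ImpInt0_dominated _ L eta); [|intros x Hx|exact Heta].
  - intros T hT. destruct (Rle_lt_or_eq_dec 0 T hT) as [hT'|<-]; [|apply RiemannInt_P7].
    apply Riemann_integrable_ext
      with (f := fun t => (sin (u * t) * exp (- beta * t / gm)) * L t); [intros; ring|].
    apply Riemann_integrable_mul_noninc; [exact hT'| | | |].
    + intros; reg.
    + intros x Hx. apply Rabs_sin_damping_le; lra.
    + intros x Hx. apply HL01; lra.
    + intros x y Hx Hxy Hy. apply HLmon; lra.
  - assert (Hk := Rabs_sin_damping_le u beta gm x Hb Hg ltac:(lra)).
    destruct (HL01 x ltac:(lra)).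
    rewrite <- Rmult_assoc, Rabs_mult, (Rabs_right (L x)) by lra.
    assert (0 <= Rabs (sin (u * x) * exp (- beta * x / gm))) by apply Rabs_pos. nra.
Qed.

Lemma damped_sin_transform_estimate L Ls s J C0 u M beta gm p I :
  (forall t, 0 <= t -> 0 <= L t <= C0 * Ls t) ->
  ImpInt0 (fun t => t * L t) s -> ImpInt0 (fun t => rpow t p * Ls t) J ->
  ImpInt0 (fun t => sin (u * t) * (exp (- beta * t / gm) * L t)) I ->
  0 < M -> Rabs u * M <= 1 -> 0 <= beta -> 0 < gm -> 1 <= p ->
  Rabs (I - u * s) <=
  Rabs u * ((u ^ 2 * M ^ 2 / 6 + beta * M / gm) * s + 2 * C0 / Rpower M (p - 1) * J).
Proof.
  intros HL Hs HJ HI HM HuM Hb Hg Hp.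
  set (c1 := Rabs u * (u ^ 2 * M ^ 2 / 6 + beta * M / gm)).
  set (c2 := 2 * Rabs u / Rpower M (p - 1)).
  assert (Hc2 : 0 <= c2) by (apply Rmult_le_pos; [generalize (Rabs_pos u); lra|
    left; apply Rinv_0_lt_compat, exp_pos]).
  assert (Hbound := ImpInt0_abs_le _ _ _ _ (ImpInt0_lin _ _ _ _ 1 (- u) HI Hs)
                      (ImpInt0_lin _ _ _ _ c1 (c2 * C0) Hs HJ)).
  replace (I - u * s) with (1 * I + - u * s) by ring.
  replace (Rabs u * _) with (c1 * s + c2 * C0 * J)
    by (unfold c1, c2; field; split; [apply Rgt_not_eq, exp_pos|lra]).
  apply Hbound. intros x Hx.
  destruct (HL x ltac:(lra)) as [HL0 HLs].
  assert (Hk := damped_sin_kernel_bound u x M beta gm p Hx HM HuM Hb Hg Hp).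
  fold c1 c2 in Hk.
  assert (Hrp : 0 <= rpow x p) by (unfold rpow; destruct (Rlt_dec 0 x); [left; apply exp_pos|lra]).
  replace (1 * (sin (u * x) * (exp (- beta * x / gm) * L x)) + - u * (x * L x))
    with ((sin (u * x) * exp (- beta * x / gm) - u * x) * L x) by ring.
  rewrite Rabs_mult, (Rabs_right (L x)) by lra.
  assert (c2 * rpow x p * L x <= c2 * rpow x p * (C0 * Ls x))
    by (apply Rmult_le_compat_l; [apply Rmult_le_pos|]; lra).
  assert (0 <= Rabs (sin (u * x) * exp (- beta * x / gm) - u * x)) by apply Rabs_pos.
  nra.
Qed.

Lemma Rpower_unbounded X e : 0 < e -> exists M, 1 <= M /\ X <= Rpower M e.
Proof.
  intro He. exists (Rpower (Rabs X + 1) (/ e)).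
  assert (HX := Rabs_pos X).
  rewrite Rpower_mult, Rinv_l, Rpower_1 by lra.
  split; [|generalize (Rle_abs X); lra].
  rewrite <- (Rpower_O (Rabs X + 1)) at 1 by lra.
  apply Rle_Rpower; [lra|]. left. apply Rinv_0_lt_compat, He.
Qed.

Lemma damping_coeff_small u M beta gm : 0 < M -> Rabs u * M <= 1 / 4 -> 0 <= beta -> 0 < gm ->
  32 * beta * M <= gm -> 0 <= u ^ 2 * M ^ 2 / 6 + beta * M / gm <= 1 / 24.
Proof.
  intros HM HuM Hb Hg Hgm.
  assert (Hu2 : u ^ 2 * M ^ 2 = (Rabs u * M) ^ 2) by (rewrite <- (pow2_abs u); ring).
  assert (0 <= Rabs u * M) by (generalize (Rabs_pos u); nra).
  assert (0 <= beta * M / gm <= 1 / 32).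
  { split; [apply Rmult_le_pos; [nra|left; apply Rinv_0_lt_compat; lra]|].
    apply Rmult_le_reg_r with gm; [lra|].
    unfold Rdiv. rewrite Rmult_assoc, Rinv_l by lra. lra. }
  rewrite Hu2. nra.
Qed.

Lemma lower_bound_of_estimate I u s sg K C0 J P :
  0 < sg -> 0 <= C0 -> 0 < P -> 16 * C0 * Rabs J / sg <= P ->
  sg / 2 <= s -> 0 <= K <= 1 / 24 ->
  Rabs (I - u * s) <= Rabs u * (K * s + 2 * C0 / P * J) ->
  3 / 16 * sg * Rabs u <= Rabs I.
Proof.
  intros Hsg HC0 HP HJ Hs HK Hest.
  assert (HD : 2 * C0 / P * J <= sg / 8).
  { apply Rle_trans with (2 * C0 * Rabs J / P).
    - unfold Rdiv. rewrite (Rmult_comm (2 * C0 * Rabs J)), (Rmult_comm (2 * C0)), Rmult_assoc.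
      apply Rmult_le_compat_l; [left; apply Rinv_0_lt_compat, HP|].
      generalize (Rle_abs J); nra.
    - apply Rmult_le_reg_r with (8 * P); [lra|].
      replace (2 * C0 * Rabs J / P * (8 * P)) with (16 * C0 * Rabs J) by (field; lra).
      apply Rmult_le_compat_r with (r := sg) in HJ; [|lra].
      replace (16 * C0 * Rabs J / sg * sg) with (16 * C0 * Rabs J) in HJ by (field; lra).
      lra. }
  assert (Hus : Rabs (u * s) <= Rabs I + Rabs (I - u * s)).
  { replace (u * s) with (I - (I - u * s)) at 1 by ring.
    eapply Rle_trans; [apply Rabs_triang|]. rewrite Rabs_Ropp. lra. }
  rewrite Rabs_mult, (Rabs_right s) in Hus by lra.
  assert (Hu := Rabs_pos u).
  assert (Rabs u * (K * s + 2 * C0 / P * J) <= Rabs u * (s / 24 + sg / 8))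
    by (apply Rmult_le_compat_l; nra).
  assert (Rabs u * (17 / 48 * sg) <= Rabs u * (23 / 24 * s - sg / 8))
    by (apply Rmult_le_compat_l; lra).
  nra.
Qed.

Theorem proposition5p8
  (lam : nat -> R) (Lbar : nat -> R -> R) (eta sig : nat -> R)
  (p q : nat -> nat -> R) (g h : nat -> R -> R) (mn : nat -> R) (gam : nat -> R)
  (lm et sg b m : R) (psi phi : R -> R) (alpha beta : R)
  (Hst : Standing lam Lbar eta sig p q g h mn gam)
  (H1 : Condition1 lam eta sig g h gam lm et sg b psi phi)
  (Hm : Un_cv (fun n => gam n * (1 - mn n)) m)
  (H2 : Condition2 alpha Lbar p q gam)
  (Hbeta0 : 0 <= beta)
  (Hbeta : beta > - (b + m) / (sg * lm)) :
  exists T0 : R, exists n0 : nat, T0 > 0 /\ (1 <= n0)%nat /\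
    forall n, (n0 <= n)%nat -> forall u, Rabs u < 1 / T0 ->
      exists I,
        ImpInt0 (fun t => sin (u * t) * (exp (- beta * t / gam n) * Lbar n t)) I /\
        Rabs I >= 3 / 16 * sg * Rabs u.
Proof.
  destruct Hst as [_ [Htail [Heta [Hsig [_ [_ [_ [Hgam [Hgam_inf _]]]]]]]]].
  destruct H1 as [_ [_ [[Hsig_cv Hsg] _]]].
  destruct H2 as [Halpha [_ [_ [C0 [Ls [HC0 [_ [[J HJ] Hdom]]]]]]]].
  destruct (Rpower_unbounded (16 * C0 * Rabs J / sg) (2 * alpha - 1 - 1)) as [M [HM HMJ]]; [lra|].
  destruct (Hsig_cv (sg / 2)) as [N1 HN1]; [lra|].
  destruct (Hgam_inf (32 * beta * M)) as [N2 HN2].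
  exists (4 * M), (max (max N1 N2) 1). split; [lra|]. split; [lia|].
  intros n Hn u Hu.
  assert (Hn1 : (1 <= n)%nat) by lia.
  assert (HuM : Rabs u * M <= 1 / 4).
  { apply Rmult_lt_compat_r with (r := M) in Hu; [|lra].
    replace (1 / (4 * M) * M) with (1 / 4) in Hu by (field; lra). lra. }
  assert (Hgn := Hgam n Hn1).
  destruct (damped_sin_transform_exists (Lbar n) (eta n) u beta (gam n)) as [I HI]; auto.
  exists I. split; [exact HI|]. apply Rle_ge.
  destruct (Rabs_def2 _ _ (HN1 n ltac:(lia))).
  apply (lower_bound_of_estimate I u (sig n) sg (u ^ 2 * M ^ 2 / 6 + beta * M / gam n)
           C0 J (Rpower M (2 * alpha - 1 - 1))); try lra; [apply exp_pos| |].
  - apply damping_coeff_small; try lra. left. apply HN2. lia.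
  - apply (damped_sin_transform_estimate (Lbar n) Ls); auto; try lra.
    intros t Ht. split; [apply (Htail n Hn1); exact Ht|apply Hdom; auto].
Qed.
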